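(* Let $\overline F_1=\mathrm{As}\odot\Bbbk\{\mathsf f_n\mid n\ge1\}\odot\mathrm{As}$ be the free $\mathrm{As}$-$\mathrm{As}$-bimodule on generators $\mathsf f_n$ of arity $n$, degree $1-n$, with differential $$\mathsf f_k\partial=\sum_{r+2+t=k}(-1)^t(1^{\otimes r}\otimes m\otimes1^{\otimes t})\mathsf f_{k-1}+\sum_{i+j=k,\ i,j\ge1}(-1)^j(\mathsf f_i\otimes\mathsf f_j)m,$$ where $m=m^{(2)}$. Let $p:\overline F_1\to\mathrm{As}$ be the bimodule map with $\mathsf f_1\mapsto m^{(1)}$ and $\mathsf f_n\mapsto0$ for $n\ge2$. Then $p$ is a homotopy equivalence in the dg-category of left $\mathrm{As}$-modules, with homotopy inverse the left $\mathrm{As}$-module map $\beta:\mathrm{As}\to\overline F_1$, $m^{(1)}\mapsto\mathsf f_1$; in particular $\beta p=1_{\mathrm{As}}$ and $p\beta$ is homotopic to an invertible map.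
   Context: $\Bbbk$ a commutative ring; complexes of $\Bbbk$-modules, Koszul signs. $\mathrm{As}$ is the dg-operad with $\mathrm{As}(0)=0$, $\mathrm{As}(n)=\Bbbk m^{(n)}$ ($n\ge1$, degree 0), $m^{(1)}$ the unit, $(m^{(n_1)}\otimes\dots\otimes m^{(n_k)})m^{(k)}=m^{(n_1+\dots+n_k)}$. Compositions and actions are written on the right: $(a_1\otimes\dots\otimes a_k)p$ is the left action of operad elements $a_s$ on $p$ of arity $k$; $(p_1\otimes\dots\otimes p_k)b$ is the right action; $1$ is the operad unit. As a left $\mathrm{As}$-module, $\overline F_1$ is free on the elements $(\mathsf f_{i_1}\otimes\dots\otimes\mathsf f_{i_k})m^{(k)}$, $k\ge1$, $i_s\ge1$. For a dg-operad $\mathcal O$, the dg-category of left $\mathcal O$-modules has as objects collections with an associative unital left action $\mathcal O\odot\mathcal P\to\mathcal P$, degree-$t$ morphisms $f$ are families of degree-$t$ linear maps $f(n):\mathcal P(n)\to\mathcal Q(n)$ commuting with the left action, and the differential is $f\mapsto f\partial-(-1)^{t}\partial f$. Composition is written in diagrammatic order ($\beta p$ means $\beta$ then $p$). *)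

From HB Require Import structures.
From mathcomp Require Import all_boot all_order all_algebra.
Set Implicit Arguments. Unset Strict Implicit. Unset Printing Implicit Defensive.
Import Order.TTheory GRing.Theory Num.Theory.
Local Open Scope ring_scope.

(* * Arities: all collections below vanish in arity 0 (As(0) = 0 and hence  *)
(*   F1bar(0) = 0), so we only record arities >= 1; the index [n : nat]      *)
(*   always stands for the ARITY n.+1.                                       *)
(* * A collection is described by a finite basis in each arity, a degree    *)
(*   function on basis elements, the action of basis elements of As on       *)
(*   basis elements, and the matrix of the differential.  An element of     *)
(*   P(n.+1) is a vector {ffun basis -> R} (direct sum of all degrees).      *)
(* * A basis element of the left As-action in arity k = n.+1 is a tensor     *)
(*   m^(d_0 + 1) (x) ... (x) m^(d_n + 1), encoded by d : n.+1.-tuple nat; it  *)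
(*   sends arity n.+1 to arity (sumn d + n).+1.                              *)
(* * Compositions/actions are written on the right; the differential acts   *)
(*   with Koszul signs for right operators:                                 *)
(*       (x (x) y) (d (x) 1) = (-1)^|y| x d (x) y.                          *)

Record bmod (R : pzRingType) := BMod {
  bas : nat -> finType;
  bdeg : forall n, bas n -> int;
  bact : forall n (d : n.+1.-tuple nat), bas n -> bas (sumn d + n);
  bdiff : forall n, bas n -> bas n -> R   (* bdiff b b' = coeff of b' in b.d *)
}.
Arguments bas {R} b n.
Arguments bdeg {R} b {n}.
Arguments bact {R} b {n} d.
Arguments bdiff {R} b {n}.

Section Generic.
Variable R : pzRingType.
Variable M : bmod R.

Definition vec n := {ffun bas M n -> R}.

Definition vdiff n (v : vec n) : vec n :=
  [ffun b' => \sum_(b : bas M n) v b * bdiff M b b'].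

Definition vact n (d : n.+1.-tuple nat) (v : vec n) : vec (sumn d + n) :=
  [ffun b' => \sum_(b : bas M n | bact M d b == b') v b].

Definition homog n (k : int) (v : vec n) : Prop :=
  forall b, v b != 0 -> bdeg M b = k.
End Generic.

Arguments vec {R} M n.

Definition hom_of_deg (R : pzRingType) (M N : bmod R) (t : int)
  (f : forall n, vec M n -> vec N n) : Prop :=
  [/\ (forall n (a : R) (u v : vec M n),
         f n [ffun b => a * u b + v b] = [ffun b => a * f n u b + f n v b]),
      (forall n (k : int) (v : vec M n), homog k v -> homog (k + t) (f n v)) &
      (forall n (d : n.+1.-tuple nat) (v : vec M n),
         f (sumn d + n) (vact d v) = vact d (f n v))].

Definition closed_hom (R : pzRingType) (M N : bmod R)
  (f : forall n, vec M n -> vec N n) : Prop :=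
  forall n (v : vec M n), vdiff (f n v) = f n (vdiff v).

(* The operad As as a left As-module: As(n.+1) = R m^(n.+1), degree 0,       *)
(* zero differential, (m^(c_1) (x) ... (x) m^(c_k)) m^(k) = m^(c_1+..+c_k).  *)
Definition As_mod (R : pzRingType) : bmod R :=
  @BMod R (fun _ => Finite.clone unit _) (fun _ _ => 0%:Z)
        (fun _ _ _ => tt) (fun _ _ _ => 0).

(* The free As-As-bimodule F1bar = As (.) k{f_n | n >= 1} (.) As.            *)
(* As a left As-module it is free on (f_{i_1} (x)..(x) f_{i_k}) m^(k), so a   *)
(* basis of F1bar(n.+1) consists of the elements                            *)
(*   (m^(j_1) (x) ... (x) m^(j_N)) (f_{i_1} (x) ... (x) f_{i_k}) m^(k),        *)
(* N = i_1 + .. + i_k, j_1 + .. + j_N = n.+1.  Such an element is encoded   *)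
(* bijectively by labelling each of the n gaps between consecutive inputs:  *)
(*   label 0 : the two inputs lie in the same block m^(j_s);                *)
(*   label 1 : different blocks m^(j_s), but entering the same f_{i_q};      *)
(*   label 2 : entering different generators f_{i_q}.                        *)
(* The degree sum_q (1 - i_q) equals minus the number of labels 1.          *)
Definition FB (n : nat) := {ffun 'I_n -> 'I_3}.

Definition lab (x : nat) : 'I_3 := inord x.

Definition degF n (b : FB n) : int := - (#|[pred g | (b g : nat) == 1%N]|)%:Z.

(* action of m^(d_0+1) (x) .. (x) m^(d_n+1): each input i is replaced by d_i+1 *)
(* inputs, all new gaps inside a block get label 0, old gaps keep labels.     *)
Definition act_labels n (d : n.+1.-tuple nat) (b : FB n) : seq nat :=
  let bs := [seq (b i : nat) | i <- enum 'I_n] in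
  flatten [seq nseq (nth 0%N d i) 0%N ++ take 1 (drop i bs) | i <- iota 0 n.+1].

Definition actF n (d : n.+1.-tuple nat) (b : FB n) : FB (sumn d + n) :=
  [ffun g : 'I_(sumn d + n) => lab (nth 0%N (act_labels d b) g)].

Definition updF n (b : FB n) (g : 'I_n) (x : nat) : FB n :=
  [ffun g' => if g' == g then lab x else b g'].

(* Differential.  The term (1^r (x) m (x) 1^t) f_{k-1} of f_k.d merges two   *)
(* adjacent blocks m^(j) under one f (label 1 -> 0), with sign (-1)^t; the  *)
(* term (-1)^j (f_i (x) f_j) m splits one f (label 1 -> 2).  Together with   *)
(* the Koszul sign (-1)^(sum of degrees of the later f's) the total sign of *)
(* both terms at gap g is +/- (-1)^(number of labels 1 to the right of g):  *)
(*   e_b . d = sum_{g, b g = 1} (-1)^#{g' > g | b g' = 1}                     *)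
(*                              (e_{b[g:=0]} - e_{b[g:=2]}).                  *)
Definition dF_coef (R : pzRingType) n (b b' : FB n) : R :=
  \sum_(g : 'I_n | (b g : nat) == 1%N)
     (-1) ^+ #|[pred g' : 'I_n | (g < g')%N && ((b g' : nat) == 1%N)]|
     * ((b' == updF b g 0)%:R - (b' == updF b g 2)%:R).

Definition F1_mod (R : pzRingType) : bmod R :=
  @BMod R (fun n => Finite.clone (FB n) _) degF actF (@dF_coef R).

(* a basis element goes to m^(n.+1) if all i_q = 1 (no label 1), else to 0.  *)
Definition pF (R : pzRingType) n (v : vec (F1_mod R) n) : vec (As_mod R) n :=
  [ffun _ => \sum_(b : FB n | [forall g, (b g : nat) != 1%N]) v b].

(* beta : As -> F1bar, the left As-module map m^(1) |-> f_1; thus           *)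
(* m^(n.+1) = (m^(n.+1)) m^(1) |-> (m^(n.+1)) f_1, the basis element with    *)
(* all labels 0.                                                            *)
Definition betaF (R : pzRingType) n (x : vec (As_mod R) n) : vec (F1_mod R) n :=
  [ffun b : FB n => if [forall g, (b g : nat) == 0%N] then x tt else 0].

From HB Require Import structures.
From mathcomp Require Import all_boot all_order all_algebra zify.
Import GRing.Theory.

Set Implicit Arguments. Unset Strict Implicit. Unset Printing Implicit Defensive.

(** Work in the basis of F1bar(n+1) by gap labellings.  Every map involved, the differential included, is given by a matrix
    of coefficients, so being a closed morphism of left As-modules of a given degree becomes
    a set of identities between coefficients; equivariance holds because the action only
    inserts 0-labelled gaps and keeps the old gaps in order.  The homotopy h sends a
    labelling to the sum, over the gaps k labelled 2 with no label 1 to their right, of the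
    labelling with 1 at k and 0 after k (the generator left of k absorbs everything to its
    right as one block).  In h d + d h the terms at gaps left of such a k cancel in pairs
    with opposite Koszul signs, and what remains telescopes along the gaps after the last
    label 1, leaving p beta - 1. *)

(* [spread d bs (size bs).+1] is [act_labels d b] for the labels bs of b: gap k becomes
   gap [gap_shift d k], and all other gaps get label 0. *)
Definition spread (ds bs : seq nat) (m : nat) : seq nat :=
  flatten [seq nseq (nth 0 ds i) 0 ++ take 1 (drop i bs) | i <- iota 0 m].

Lemma spread_cons ds y bs m :
  spread ds (y :: bs) m.+1 = nseq (head 0 ds) 0 ++ y :: spread (behead ds) bs m.
Proof.
rewrite /spread /= -[1]/(1 + 0) iotaDl -map_comp /= take0.
have -> : nth 0 ds 0 = head 0 ds by case: ds.
rewrite -catA /=; congr (_ ++ _ :: flatten _); apply: eq_map => i /=.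
by rewrite add1n add0n; case: ds => [|x ds] //=; rewrite !nth_nil.
Qed.

Definition gap_shift (ds : seq nat) k := k + sumn (take k.+1 ds).

Lemma gap_shift0 ds : gap_shift ds 0 = head 0 ds.
Proof. by case: ds => //= x ds; rewrite /gap_shift /= take0 /= !addn0. Qed.

Lemma gap_shiftS ds k : gap_shift ds k.+1 = head 0 ds + 1 + gap_shift (behead ds) k.
Proof. by case: ds => [|x ds]; rewrite /gap_shift /=; lia. Qed.

Lemma nth_spread_shift bs ds k : k < size bs ->
  nth 0 (spread ds bs (size bs).+1) (gap_shift ds k) = nth 0 bs k.
Proof.
elim: bs ds k => [|y bs IH] ds k //= klt.
rewrite spread_cons; case: k klt => [|k] klt.
  by rewrite gap_shift0 nth_cat size_nseq ltnn subnn.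
rewrite gap_shiftS nth_cat size_nseq ifF; last by lia.
have -> : head 0 ds + 1 + gap_shift (behead ds) k - head 0 ds
          = (gap_shift (behead ds) k).+1 by lia.
by rewrite /= IH.
Qed.

Lemma nth_spread_new bs ds j : (forall k, k < size bs -> gap_shift ds k != j) ->
  nth 0 (spread ds bs (size bs).+1) j = 0.
Proof.
elim: bs ds j => [|y bs IH] ds j new.
  by rewrite /spread /= !cats0 nth_nseq if_same.
rewrite /= spread_cons nth_cat size_nseq; case: ifP => jlt.
  by rewrite nth_nseq if_same.
have := new 0 isT; rewrite gap_shift0 => hj.
case E: (j - head 0 ds) => [|j']; first by move: hj E jlt; lia.
rewrite /= IH // => k kl; have := new k.+1 kl; rewrite gap_shiftS; lia.
Qed.

Lemma leq_sumn_take s i j : i <= j -> sumn (take i s) <= sumn (take j s).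
Proof. by move=> ij; rewrite -(subnKC ij) takeD sumn_cat leq_addr. Qed.

Lemma ltn_gap_shift ds i j : (gap_shift ds i < gap_shift ds j) = (i < j).
Proof.
rewrite /gap_shift; case: (ltnP i j) => ij.
  by have := @leq_sumn_take ds i.+1 j.+1 (ltnW ij); lia.
by have := @leq_sumn_take ds j.+1 i.+1 ij; lia.
Qed.

Lemma gap_shift_bound n (d : n.+1.-tuple nat) (k : 'I_n) : gap_shift d k < sumn d + n.
Proof.
have : sumn (take k.+1 d) <= sumn d.
  by rewrite -{2}(cat_take_drop k.+1 d) sumn_cat leq_addr.
by rewrite /gap_shift; have := ltn_ord k; lia.
Qed.

Definition shift_ord n (d : n.+1.-tuple nat) (k : 'I_n) : 'I_(sumn d + n) :=
  Ordinal (gap_shift_bound d k).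

Lemma ltn_shift_ord n (d : n.+1.-tuple nat) i j :
  (shift_ord d i < shift_ord d j) = (i < j).
Proof. exact: ltn_gap_shift. Qed.

Lemma shift_ord_inj n (d : n.+1.-tuple nat) : injective (shift_ord d).
Proof.
move=> i j eij; apply/val_inj/eqP; case: ltngtP => // ij.
  by have := ltn_shift_ord d i j; rewrite ij eij ltnn.
by have := ltn_shift_ord d j i; rewrite ij eij ltnn.
Qed.

Lemma val_lab x : x < 3 -> lab x = x :> nat.
Proof. exact: inordK. Qed.

Lemma lab_ord (y : 'I_3) : lab y = y.
Proof. by apply: val_inj => /=; rewrite val_lab. Qed.

Definition f1_only n (b : FB n) := [forall g, (b g : nat) != 1].

Definition betaB n : FB n := [ffun => lab 0].

Lemma betaBP n (b : FB n) : reflect (b = betaB n) [forall g, (b g : nat) == 0].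
Proof.
apply: (iffP forallP) => [b0|-> g]; last by rewrite ffunE val_lab.
by apply/ffunP => g; rewrite ffunE -(lab_ord (b g)) (eqP (b0 g)).
Qed.

Lemma f1_only_betaB n : f1_only (betaB n).
Proof. by apply/forallP => g; rewrite ffunE val_lab. Qed.

Lemma degF_f1_only n (b : FB n) : f1_only b -> degF b = 0.
Proof. by move=> /forallP b1; rewrite /degF eq_card0 // => g; apply/negbTE/b1. Qed.

Section Action.
Variables (n : nat) (d : n.+1.-tuple nat).

Lemma actF_shift (b : FB n) k : actF d b (shift_ord d k) = b k.
Proof.
have sz : size [seq (b i : nat) | i <- enum 'I_n] = n by rewrite size_map size_enum_ord.
rewrite /actF ffunE /act_labels -[in iota 0 _]sz nth_spread_shift ?sz //.
by rewrite (nth_map k) ?size_enum_ord // nth_ord_enum lab_ord.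
Qed.

Lemma actF_new (b : FB n) g :
  (forall k, shift_ord d k != g) -> actF d b g = 0 :> nat.
Proof.
have sz : size [seq (b i : nat) | i <- enum 'I_n] = n by rewrite size_map size_enum_ord.
move=> new; rewrite /actF ffunE /act_labels -[in iota 0 _]sz nth_spread_new ?val_lab //.
move=> k; rewrite sz => kn.
by apply: contra (new (Ordinal kn)) => /eqP e; apply/eqP/val_inj.
Qed.

Lemma shift_ordP (g : 'I_(sumn d + n)) :
  {k | g = shift_ord d k} + {forall k, shift_ord d k != g}.
Proof.
case: (pickP (fun k => shift_ord d k == g)) => [k /eqP <-|none]; first by left; exists k.
by right => k; rewrite none.
Qed.

Lemma f1_only_actF (b : FB n) : f1_only (actF d b) = f1_only b.
Proof.
apply/forallP/forallP => b1 g; first by have := b1 (shift_ord d g); rewrite actF_shift.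
by case: (shift_ordP g) => [[k ->]|new]; rewrite ?actF_shift ?actF_new.
Qed.

Lemma actF_betaB : actF d (betaB n) = betaB (sumn d + n).
Proof.
apply/ffunP => g; rewrite [RHS]ffunE -(lab_ord (actF _ _ _)).
by case: (shift_ordP g) => [[k ->]|new]; rewrite ?actF_shift ?actF_new ?ffunE ?val_lab.
Qed.
End Action.

Local Open Scope ring_scope.

Lemma sum_delta_mull (R : pzSemiRingType) (T : finType) (X : T -> R) u :
  \sum_c (c == u)%:R * X c = X u.
Proof.
rewrite (bigD1 u) //= eqxx mul1r big1 ?addr0 // => c /negbTE ->.
by rewrite mul0r.
Qed.

Lemma sum_delta_cond (R : pzSemiRingType) (T : finType) (P : pred T) u :
  \sum_(x | P x) (x == u)%:R = (P u)%:R :> R.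
Proof.
rewrite big_mkcond (bigD1 u) //= eqxx big1 ?addr0 => [|x /negbTE ->]; first by case: (P u).
by case: (P x).
Qed.

Lemma sum_fiber_mulr (R : pzSemiRingType) (A B : finType) (f : A -> B)
    (w : A -> R) (G : B -> R) :
  \sum_c (\sum_(a | f a == c) w a) * G c = \sum_a w a * G (f a).
Proof.
under eq_bigr do rewrite big_distrl.
rewrite (exchange_big_dep xpredT) //=; apply: eq_bigr => a _.
by rewrite (big_pred1 (f a)) // => c /=; rewrite eq_sym.
Qed.

Definition kernel (R : pzRingType) (M N : bmod R) := forall n, bas M n -> bas N n -> R.

Definition kmap (R : pzRingType) (M N : bmod R) (K : kernel M N) n (v : vec M n) :
    vec N n :=
  [ffun c => \sum_b v b * K n b c].

Definition kcomp (R : pzRingType) (M N P : bmod R) (K : kernel M N) (L : kernel N P) :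
    kernel M P :=
  fun n b c => \sum_a K n b a * L n a c.
Arguments kcomp {R M N P} K L n b c.

Definition represents (R : pzRingType) (M N : bmod R) (K : kernel M N)
    (f : forall n, vec M n -> vec N n) :=
  forall n v, f n v = kmap K v.

Section Kernels.
Variable R : pzRingType.

Lemma vdiff_kmap (Q : bmod R) n (v : vec Q n) : vdiff v = kmap (@bdiff R Q) v.
Proof. by []. Qed.

Lemma kmap_comp (M N P : bmod R) (K : kernel M N) (L : kernel N P) n (v : vec M n) :
  kmap L (kmap K v) = kmap (kcomp K L) v.
Proof.
apply/ffunP => c; rewrite !ffunE.
under eq_bigr do rewrite ffunE big_distrl.
rewrite exchange_big; apply: eq_bigr => b _; rewrite mulr_sumr.
by apply: eq_bigr => a _; rewrite mulrA.
Qed.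

Lemma kmap_linear (M N : bmod R) (K : kernel M N) n (a : R) (u v : vec M n) :
  kmap K [ffun b => a * u b + v b] = [ffun c => a * kmap K u c + kmap K v c].
Proof.
apply/ffunP => c; rewrite !ffunE mulr_sumr -big_split /=.
by apply: eq_bigr => b _; rewrite ffunE mulrDl mulrA.
Qed.

Lemma kmap_homog (M N : bmod R) (K : kernel M N) (t k : int) n (v : vec M n) :
  (forall b c, K n b c != 0 -> bdeg N c = bdeg M b + t) ->
  homog k v -> homog (k + t) (kmap K v).
Proof.
move=> Kdeg vk c; rewrite ffunE => nz.
have /existsP[b vbK] : [exists b, v b * K n b c != 0].
  apply: contraNT nz => /existsPn z; apply/eqP.
  by rewrite big1 // => b _; apply/eqP; rewrite -[_ == 0]negbK z.
have vb : v b != 0 by apply: contra_neq vbK => ->; rewrite mul0r.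
have Kb : K n b c != 0 by apply: contra_neq vbK => ->; rewrite mulr0.
by rewrite (Kdeg b) // vk.
Qed.

Lemma kmap_vact (M N : bmod R) (K : kernel M N) n (d : n.+1.-tuple nat) (v : vec M n) :
  (forall b c, K _ (bact M d b) c = \sum_(b' | bact N d b' == c) K n b b') ->
  kmap K (vact d v) = vact d (kmap K v).
Proof.
move=> Kact; apply/ffunP => c; rewrite /kmap /vact !ffunE.
under eq_bigr do rewrite ffunE.
rewrite sum_fiber_mulr.
under [RHS]eq_bigr do rewrite ffunE.
rewrite exchange_big /=; apply: eq_bigr => b _.
by rewrite Kact mulr_sumr.
Qed.

Lemma eq_kmap (M N : bmod R) (K L : kernel M N) n (v : vec M n) :
  (forall b c, K n b c = L n b c) -> kmap K v = kmap L v.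
Proof.
by move=> KL; apply/ffunP => c; rewrite !ffunE; apply: eq_bigr => b _; rewrite KL.
Qed.

Lemma represents_hom_of_deg (M N : bmod R) (K : kernel M N) f (t : int) :
  represents K f ->
  (forall n b c, K n b c != 0 -> bdeg N c = bdeg M b + t) ->
  (forall n (d : n.+1.-tuple nat) b c,
     K _ (bact M d b) c = \sum_(b' | bact N d b' == c) K n b b') ->
  hom_of_deg t f.
Proof.
move=> fK Kdeg Kact; split=> [n a u v|n k v|n d v]; rewrite !fK.
- exact: kmap_linear.
- exact: kmap_homog (Kdeg n).
- exact: kmap_vact (Kact n d).
Qed.

Lemma represents_closed_hom (M N : bmod R) (K : kernel M N) f :
  represents K f ->
  (forall n b c, kcomp K (@bdiff R N) n b c = kcomp (@bdiff R M) K n b c) ->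
  closed_hom f.
Proof.
by move=> fK KD n v; rewrite !fK !vdiff_kmap !kmap_comp; apply: eq_kmap.
Qed.

Lemma kmap_homotopy (M : bmod R) (P H : kernel M M) n (v : vec M n) c :
  (forall b, P n b c - (b == c)%:R
             = kcomp H (@bdiff R M) n b c + kcomp (@bdiff R M) H n b c) ->
  kmap P v c - v c = vdiff (kmap H v) c + kmap H (vdiff v) c.
Proof.
move=> PH; rewrite !vdiff_kmap !kmap_comp !ffunE -big_split /=.
under [RHS]eq_bigr do rewrite -mulrDr -PH mulrBr.
rewrite sumrB; congr (_ - _); rewrite (bigD1 c) //= eqxx mulr1 big1 ?addr0 //.
by move=> b /negbTE ->; rewrite mulr0.
Qed.
End Kernels.


Definition label1 n (b : FB n) g := (b g : nat) == 1%N.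

Definition no1_after n (b : FB n) (k : 'I_n) :=
  [forall g : 'I_n, (k < g)%N ==> ((b g : nat) != 1%N)].

Definition hgap n (b : FB n) k := ((b k : nat) == 2%N) && no1_after b k.

Definition hmove n (b : FB n) (k : 'I_n) : FB n :=
  [ffun g => if g == k then lab 1 else if (k < g)%N then lab 0 else b g].

Definition hK (R : pzRingType) : kernel (F1_mod R) (F1_mod R) :=
  fun n b c => \sum_(k | hgap b k) (c == hmove b k)%:R.
Arguments hK R [n] b c.

Definition dsign (R : pzRingType) n (b : FB n) (g : 'I_n) : R :=
  (-1) ^+ #|[pred g' : 'I_n | (g < g')%N && ((b g' : nat) == 1%N)]|.

Definition dterm (R : pzRingType) n (b0 c : FB n) g : R :=
  (b0 == updF c g 0)%:R - (b0 == updF c g 2)%:R.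

Definition zero_from n (b : FB n) (j : nat) : FB n :=
  [ffun g : 'I_n => if (j <= g)%N then lab 0 else b g].

Section Homotopy.
Variables (R : pzRingType) (n : nat).
Implicit Types (b c : FB n) (g k : 'I_n).

Lemma dF_coefE b b0 : dF_coef R b b0 = \sum_(g | label1 b g) dsign R b g * dterm R b0 b g.
Proof. by []. Qed.

Lemma sum_dF_mull b (X : FB n -> R) :
  \sum_c dF_coef R b c * X c =
  \sum_(g | label1 b g) dsign R b g * (X (updF b g 0) - X (updF b g 2)).
Proof.
under eq_bigr do rewrite big_distrl.
rewrite exchange_big; apply: eq_bigr => g _ /=.
under eq_bigr do rewrite -mulrA mulrBl.
by rewrite -mulr_sumr sumrB !sum_delta_mull.
Qed.

Lemma sum_hK_mull b (X : FB n -> R) :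
  \sum_c hK R b c * X c = \sum_(k | hgap b k) X (hmove b k).
Proof.
under eq_bigr do rewrite big_distrl.
by rewrite exchange_big; apply: eq_bigr => k _ /=; rewrite sum_delta_mull.
Qed.

Lemma updFE b g x g' : updF b g x g' = if g' == g then lab x else b g'.
Proof. by rewrite ffunE. Qed.

Lemma hmoveE b k g :
  hmove b k g = if g == k then lab 1 else if (k < g)%N then lab 0 else b g.
Proof. by rewrite ffunE. Qed.

Lemma f1_only_updF02 b g : f1_only (updF b g 0) = f1_only (updF b g 2).
Proof.
by apply: eq_forallb => g'; rewrite !updFE; case: (g' =P g) => _; rewrite ?val_lab.
Qed.

Lemma label1_hmove b k g : label1 (hmove b k) g = (g == k) || ((g < k)%N && label1 b g).
Proof.
rewrite /label1 hmoveE; case: (g =P k) => [->|/eqP ne]; first by rewrite val_lab.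
case: ltnP => h /=; first by rewrite val_lab // ltnNge ltnW.
by rewrite ltn_neqAle h val_eqE ne.
Qed.

Lemma hgap_updF02 b g k : k != g -> hgap (updF b g 0) k = hgap (updF b g 2) k.
Proof.
move=> kg; rewrite /hgap /no1_after !updFE (negbTE kg); congr andb.
apply: eq_forallb => g'; rewrite !updFE.
by case: (g' =P g) => // _; rewrite !val_lab.
Qed.

Lemma hgap_updF_gt b g k x : (g < k)%N -> hgap (updF b g x) k = hgap b k.
Proof.
move=> gk; rewrite /hgap /no1_after updFE ifF; last first.
  by apply/negbTE; apply: contraTneq gk => ->; rewrite ltnn.
congr andb; apply: eq_forallb => g'; rewrite updFE; case: (g' =P g) => // ->.
by rewrite ltnNge ltnW.
Qed.

Lemma hgap_updF0 b g : hgap (updF b g 0) g = false.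
Proof. by rewrite /hgap updFE eqxx val_lab. Qed.

Lemma hgap_updF2 b g : hgap (updF b g 2) g = no1_after b g.
Proof.
rewrite /hgap updFE eqxx val_lab //=; apply: eq_forallb => g'; rewrite updFE.
by case: (g' =P g) => // ->; rewrite ltnn.
Qed.

Lemma hmove_updF02 b g k : (k < g)%N -> hmove (updF b g 0) k = hmove (updF b g 2) k.
Proof.
move=> kg; apply/ffunP => g'; rewrite !hmoveE !updFE.
by case: (g' =P k) => // _; case: (g' =P g) => [->|//]; rewrite kg.
Qed.

Lemma hmove_updF_eq b g x : hmove (updF b g x) g = hmove b g.
Proof. by apply/ffunP => g'; rewrite !hmoveE !updFE; case: (g' =P g). Qed.

Lemma hmove_updF_gt b g k x : (g < k)%N -> hmove (updF b g x) k = updF (hmove b k) g x.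
Proof.
move=> gk; apply/ffunP => g'; rewrite updFE !hmoveE updFE.
case: (g' =P g) => [->|_] //.
rewrite ifF; last by apply/negbTE; apply: contraTneq gk => ->; rewrite ltnn.
by rewrite ltnNge ltnW.
Qed.

Lemma dsign_hmove b k : dsign R (hmove b k) k = 1.
Proof.
rewrite /dsign eq_card0 ?expr0 // => g'; rewrite inE /= hmoveE.
case: (g' =P k) => [->|_]; first by rewrite ltnn.
by case: ltnP => //= _; rewrite val_lab.
Qed.

Lemma dsign_no1_after b g : no1_after b g -> dsign R b g = 1.
Proof.
move=> /forallP b1; rewrite /dsign eq_card0 ?expr0 // => g'; rewrite inE /=.
by have := b1 g'; case: (g < g')%N => //= /negbTE ->.
Qed.

Lemma dsign_hmove_lt b k g : hgap b k -> (g < k)%N -> dsign R (hmove b k) g = - dsign R b g.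
Proof.
move=> /andP[bk2 /forallP b1] gk; rewrite /dsign.
rewrite (eq_card
  (B := [predU1 k & [pred g' : 'I_n | (g < g')%N && ((b g' : nat) == 1%N)]])).
  by rewrite cardU1 inE /= (eqP bk2) andbF /= add1n exprS mulN1r.
move=> g'; rewrite !inE /= hmoveE.
case: (g' =P k) => [->|_]; first by rewrite gk val_lab.
case: (ltnP k g') => h //=.
by rewrite val_lab //=; have := b1 g'; rewrite h /= => /negbTE ->.
Qed.

Lemma degF_hmove b k : hgap b k -> degF (hmove b k) = degF b - 1.
Proof.
move=> /andP[bk2 /forallP b1].
rewrite /degF (eq_card (B := [predU1 k & [pred g : 'I_n | (b g : nat) == 1%N]])).
  by rewrite cardU1 inE /= (eqP bk2) /= add1n -addn1 PoszD opprD.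
move=> g; rewrite !inE /= -/(label1 (hmove b k) g) label1_hmove.
case: (g =P k) => //= /eqP ne; case: (ltnP g k) => //= kg.
have : (k < g)%N by rewrite ltn_neqAle kg eq_sym val_eqE ne.
by move/(implyP (b1 g))/negbTE.
Qed.

Lemma hK_updF_sub b b0 g : hK R (updF b g 0) b0 - hK R (updF b g 2) b0 =
  \sum_(k : 'I_n | (g < k)%N && hgap b k) dterm R b0 (hmove b k) g
  - (no1_after b g)%:R * (b0 == hmove b g)%:R.
Proof.
rewrite /hK !(big_mkcond (hgap _)) -sumrB (bigD1 g) //= [X in _ = X - _]big_mkcond.
rewrite [X in _ = X - _](bigD1 g) //=.
rewrite ltnn hgap_updF0 hgap_updF2 hmove_updF_eq sub0r add0r addrC.
congr (_ + _); last by case: (no1_after b g); rewrite ?mul1r ?mul0r ?oppr0.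
apply: eq_bigr => k kg; case: (ltngtP k g) => kg'.
- by rewrite hgap_updF02 // hmove_updF02 // subrr.
- by rewrite !hgap_updF_gt // !hmove_updF_gt //; case: (hgap b k); rewrite ?subrr.
- by case/eqP: kg; apply: val_inj.
Qed.

Lemma dF_hmove b b0 k : hgap b k -> dF_coef R (hmove b k) b0 =
  dterm R b0 (hmove b k) k
  - \sum_(g : 'I_n | (g < k)%N && label1 b g) dsign R b g * dterm R b0 (hmove b k) g.
Proof.
move=> kgap; rewrite dF_coefE (bigD1 k) ?label1_hmove ?eqxx //= dsign_hmove mul1r.
congr (_ + _); rewrite -sumrN; apply: eq_big => g.
  by rewrite label1_hmove; case: (g =P k) => [->|_] /=; rewrite ?ltnn ?andbT.
move=> /andP[]; rewrite label1_hmove => /orP[/eqP->|/andP[gk _]]; first by rewrite eqxx.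
by rewrite dsign_hmove_lt // mulNr.
Qed.

Lemma hK_dF_anticommutator b b0 :
  \sum_c hK R b c * dF_coef R c b0 + \sum_c dF_coef R b c * hK R c b0 =
  \sum_(k | hgap b k) dterm R b0 (hmove b k) k
  - \sum_(g | label1 b g) dsign R b g * ((no1_after b g)%:R * (b0 == hmove b g)%:R).
Proof.
have cross : \sum_(k | hgap b k) \sum_(g : 'I_n | (g < k)%N && label1 b g)
                dsign R b g * dterm R b0 (hmove b k) g =
             \sum_(g | label1 b g) dsign R b g *
                \sum_(k : 'I_n | (g < k)%N && hgap b k) dterm R b0 (hmove b k) g.
  rewrite (exchange_big_dep (label1 b)) /=; last by move=> k g _ /andP[].
  apply: eq_bigr => g g1; rewrite mulr_sumr; apply: eq_bigl => k.
  by rewrite g1 andbT andbC.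
rewrite sum_hK_mull sum_dF_mull.
under eq_bigr => k kgap do rewrite dF_hmove //.
under [X in _ + X]eq_bigr => g _ do rewrite hK_updF_sub mulrBr.
by rewrite !sumrB cross addrA subrK.
Qed.

Lemma zero_from_n b : zero_from b n = b.
Proof. by apply/ffunP => g; rewrite ffunE leqNgt ltn_ord. Qed.

Lemma zero_from0 b : zero_from b 0 = betaB n.
Proof. by apply/ffunP => g; rewrite !ffunE. Qed.

Lemma updF_hmove0 b k : updF (hmove b k) k 0 = zero_from b k.
Proof.
apply/ffunP => g; rewrite updFE hmoveE ffunE.
case: (g =P k) => [->|/eqP ne]; first by rewrite leqnn.
case: (ltnP k g) => h; first by rewrite ltnW.
by rewrite leqNgt ltn_neqAle h val_eqE ne.
Qed.

Lemma updF_hmove2 b k : (b k : nat) == 2%N -> updF (hmove b k) k 2 = zero_from b k.+1.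
Proof.
move=> /eqP bk2; apply/ffunP => g; rewrite updFE hmoveE ffunE.
case: (g =P k) => [->|_]; last by case: ltnP.
by rewrite ltnn; apply: val_inj; rewrite /= val_lab // bk2.
Qed.

Lemma hmove_label1 b k : label1 b k -> hmove b k = zero_from b k.+1.
Proof.
move=> /eqP bk1; apply/ffunP => g; rewrite hmoveE ffunE.
case: (g =P k) => [->|_]; last by case: ltnP.
by rewrite ltnn; apply: val_inj; rewrite /= val_lab // bk1.
Qed.

Lemma zero_fromS b k : (b k : nat) == 0%N -> zero_from b k = zero_from b k.+1.
Proof.
move=> /eqP bk0; apply/ffunP => g; rewrite !ffunE.
case: (g =P k) => [->|/eqP ne].
  by rewrite leqnn ltnn; apply: val_inj; rewrite /= val_lab // bk0.
by rewrite [(k <= g)%N]leq_eqVlt eq_sym val_eqE (negbTE ne).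
Qed.

Lemma sum_hgap_dterm b b0 (m : nat) : (m <= n)%N ->
  (forall k : 'I_n, (m <= k)%N -> ~~ label1 b k) ->
  (forall k, hgap b k -> (m <= k)%N) ->
  \sum_(k | hgap b k) dterm R b0 (hmove b k) k = (b0 == zero_from b m)%:R - (b0 == b)%:R.
Proof.
move=> mn no1 gap_ge.
pose f j : R := (b0 == zero_from b j)%:R.
have telescoping k : (m <= k)%N ->
    (if hgap b k then dterm R b0 (hmove b k) k else 0) = f k - f k.+1.
  move=> mk; case kgap: (hgap b k).
    by move: kgap => /andP[bk2 _]; rewrite /dterm updF_hmove0 updF_hmove2.
  have bk0 : (b k : nat) == 0%N.
    have b1 : no1_after b k.
      by apply/forallP => g; apply/implyP => kg; apply: no1; apply: leq_trans mk (ltnW kg).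
    move: kgap (no1 k mk); rewrite /hgap /label1 b1 andbT.
    by case: (b k) => [[|[|[|x]]] ?].
  by rewrite /f zero_fromS // subrr.
rewrite big_mkcond.
rewrite (eq_bigr (fun k : 'I_n => if (m <= k)%N then f k - f k.+1 else 0)); last first.
  move=> k _; case: leqP => mk; first exact: telescoping.
  by case kgap: (hgap b k) => //; move: mk; rewrite ltnNge gap_ge.
rewrite -big_mkcond /=.
have -> : \sum_(k < n | (m <= k)%N) (f k - f k.+1) = \sum_(m <= k < n) (f k - f k.+1).
  by rewrite big_geq_mkord.
under eq_bigr do rewrite -opprB.
by rewrite sumrN telescope_sumr // opprB /f zero_from_n.
Qed.

Lemma homotopy_coef b b0 :
  (f1_only b && (b0 == betaB n))%:R - (b == b0)%:R =
  \sum_c hK R b c * dF_coef R c b0 + \sum_c dF_coef R b c * hK R c b0.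
Proof.
rewrite hK_dF_anticommutator [b == b0]eq_sym.
case: (boolP [exists g, label1 b g]) => [/existsP[g0 g01] | /existsPn no1].
- have [L L1 Lmax] := arg_maxnP (fun g : 'I_n => (g : nat)) g01.
  have L_last g : (L < g)%N -> ~~ label1 b g.
    by move=> Lg; apply: contraL Lg => /Lmax; rewrite -leqNgt.
  have L_no1 : no1_after b L by apply/forallP => g; apply/implyP => /L_last.
  rewrite (@sum_hgap_dterm b b0 L.+1) //; first last.
  + move=> k /andP[bk2 /forallP b1]; rewrite ltnNge; apply/negP => kL.
    case: (k =P L) => [e|/eqP ne]; first by move: bk2 L1; rewrite e /label1 => /eqP ->.
    by have := b1 L; rewrite ltn_neqAle kL val_eqE ne (eqP L1).
  rewrite (bigD1 L) //= big1 => [|g /andP[g1 gL]]; last first.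
    have : ~~ no1_after b g.
      apply/forallPn; exists L; rewrite negb_imply negbK -/(label1 b L) L1 andbT.
      by rewrite ltn_neqAle val_eqE gL; apply: Lmax.
    by move/negbTE => ->; rewrite mul0r mulr0.
  rewrite dsign_no1_after // L_no1 hmove_label1 // mul1r addr0.
  have -> : f1_only b = false by apply/negbTE/forallPn; exists L; rewrite negbK.
  by rewrite mulr1n mul1r addrAC subrr.
- rewrite (@sum_hgap_dterm b b0 0) // big_pred0 ?subr0 ?zero_from0 => [|g].
  + by have -> : f1_only b by apply/forallP.
  exact/negbTE/no1.
Qed.
End Homotopy.

Section HomotopyAction.
Variables (R : pzRingType) (n : nat) (d : n.+1.-tuple nat).

Lemma hgap_actF (b : FB n) k :
  hgap (actF d b) (shift_ord d k) = hgap b k.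
Proof.
rewrite /hgap /no1_after actF_shift; congr andb.
apply/forallP/forallP => b1 g.
  by have := b1 (shift_ord d g); rewrite ltn_shift_ord actF_shift.
apply/implyP => kg; case: (shift_ordP g) => [[j gj]|new]; last by rewrite actF_new.
by move: kg; rewrite gj ltn_shift_ord actF_shift => /(implyP (b1 j)).
Qed.

Lemma hmove_actF (b : FB n) k :
  hmove (actF d b) (shift_ord d k) = actF d (hmove b k).
Proof.
apply/ffunP => g; rewrite hmoveE.
case: (shift_ordP g) => [[j ->]|new].
  by rewrite !actF_shift hmoveE ltn_shift_ord (inj_eq (@shift_ord_inj n d)).
rewrite ifF; last by apply/negbTE; rewrite eq_sym new.
apply: val_inj; rewrite /= actF_new //.
by case: ifP => _; rewrite ?val_lab ?actF_new.
Qed.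

Lemma sum_hgap_actF (b : FB n) (F : 'I_(sumn d + n) -> R) :
  \sum_(g | hgap (actF d b) g) F g = \sum_(k | hgap b k) F (shift_ord d k).
Proof.
rewrite big_mkcond [RHS]big_mkcond (bigID (mem (shift_ord d @: setT))) /=.
rewrite [X in _ + X]big1 ?addr0 => [|g]; last first.
  case: (shift_ordP g) => [[k ->]|new]; first by rewrite imset_f.
  by rewrite /hgap actF_new.
rewrite big_imset /=; last by move=> i j _ _; apply: shift_ord_inj.
by apply: eq_big => [k|k _]; rewrite ?inE ?hgap_actF.
Qed.

Lemma hK_actF (b : FB n) c :
  hK R (actF d b) c = \sum_(b' | actF d b' == c) hK R b b'.
Proof.
rewrite /hK sum_hgap_actF exchange_big /=; apply: eq_bigr => k _.
by rewrite hmove_actF sum_delta_cond eq_sym.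
Qed.
End HomotopyAction.

Section PBeta.
Variable R : pzRingType.

Definition pK : kernel (F1_mod R) (As_mod R) := fun n b _ => (f1_only b)%:R.
Definition betaK : kernel (As_mod R) (F1_mod R) := fun n _ c => (c == betaB n)%:R.

Lemma pF_kmap : represents pK (@pF R).
Proof.
move=> n v; apply/ffunP => u; rewrite !ffunE big_mkcond.
by apply: eq_bigr => b _; rewrite /pK /f1_only; case: ifP; rewrite ?mulr1 ?mulr0.
Qed.

Lemma betaF_kmap : represents betaK (@betaF R).
Proof.
move=> n x; apply/ffunP => c; rewrite !ffunE (big_pred1 tt) => [|[]] //.
by rewrite /betaK (sameP (betaBP c) eqP); case: eqP; rewrite ?mulr1 ?mulr0.
Qed.

Lemma pK_deg n (b : FB n) u :
  pK b u != 0 -> bdeg (As_mod R) u = bdeg (F1_mod R) b + 0.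
Proof.
by rewrite /pK /= addr0; case: (boolP (f1_only b)) => [/degF_f1_only ->|_]; rewrite ?eqxx.
Qed.

Lemma pK_act n (d : n.+1.-tuple nat) (b : FB n) u :
  pK (actF d b) u = \sum_(u' | bact (As_mod R) d u' == u) pK b u'.
Proof. by case: u; rewrite /pK f1_only_actF (big_pred1 tt) // => -[]. Qed.

Lemma pK_closed n (b : FB n) u :
  kcomp pK (@bdiff R (As_mod R)) n b u = kcomp (@bdiff R (F1_mod R)) pK n b u.
Proof.
rewrite /kcomp /= big1 => [|u' _]; last by rewrite mulr0.
by rewrite sum_dF_mull big1 // => g _; rewrite /pK f1_only_updF02 subrr mulr0.
Qed.

Lemma betaK_deg n u (c : FB n) :
  betaK u c != 0 -> bdeg (F1_mod R) c = bdeg (As_mod R) u + 0.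
Proof.
rewrite /betaK; have [-> _|_] := eqVneq c (betaB n); last by rewrite eqxx.
exact/degF_f1_only/f1_only_betaB.
Qed.

Lemma betaK_act n (d : n.+1.-tuple nat) u (c : FB (sumn d + n)) :
  betaK (bact (As_mod R) d u) c = \sum_(b' | actF d b' == c) betaK u b'.
Proof. by rewrite /betaK sum_delta_cond actF_betaB eq_sym. Qed.

Lemma betaK_closed n u (c : FB n) :
  kcomp betaK (@bdiff R (F1_mod R)) n u c = kcomp (@bdiff R (As_mod R)) betaK n u c.
Proof.
rewrite /kcomp /= [RHS]big1 => [|u' _]; last by rewrite mul0r.
rewrite sum_delta_mull /dF_coef big_pred0 // => g.
by rewrite ffunE val_lab.
Qed.

Lemma pF_betaF n (x : vec (As_mod R) n) : pF (betaF x) = x.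
Proof.
rewrite betaF_kmap pF_kmap kmap_comp; apply/ffunP => -[].
rewrite ffunE (big_pred1 tt) => [|[]] //.
by rewrite /kcomp sum_delta_mull /pK f1_only_betaB mulr1.
Qed.

Lemma p_beta_coef n (b c : FB n) :
  kcomp pK betaK n b c = (f1_only b && (c == betaB n))%:R.
Proof. by rewrite /kcomp (big_pred1 tt) => [|[]] //; rewrite /pK /betaK -natrM mulnb. Qed.

Lemma hK_deg n (b c : FB n) : hK R b c != 0 -> degF c = degF b + -1.
Proof.
move=> nz; have /existsP[k /andP[kgap /eqP ->]] : [exists k, hgap b k && (c == hmove b k)].
  apply: contraNT nz => /existsPn none; apply/eqP; rewrite /hK big1 // => k kgap.
  by move: (none k); rewrite kgap /= => /negbTE ->.
exact: degF_hmove.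
Qed.
End PBeta.

Theorem mainTheorem5 (R : comPzRingType) :
  (hom_of_deg 0 (@pF R) /\ closed_hom (@pF R)) /\
  (hom_of_deg 0 (@betaF R) /\ closed_hom (@betaF R)) /\
  (forall n (x : vec (As_mod R) n), pF (betaF x) = x) /\
  (exists h : forall n, vec (F1_mod R) n -> vec (F1_mod R) n,
     hom_of_deg (-1) h /\
     forall n (v : vec (F1_mod R) n) (b : FB n),
       betaF (pF v) b - v b = vdiff (h n v) b + h n (vdiff v) b).
Proof.
have hK_rep : represents (hK R) (fun n => @kmap _ _ _ (hK R) n) by [].
split; [split|split; [split|split]].
- exact: represents_hom_of_deg (@pF_kmap R) (@pK_deg R) (@pK_act R).
- exact: represents_closed_hom (@pF_kmap R) (@pK_closed R).
- exact: represents_hom_of_deg (@betaF_kmap R) (@betaK_deg R) (@betaK_act R).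
- exact: represents_closed_hom (@betaF_kmap R) (@betaK_closed R).
- exact: pF_betaF.
- exists (fun n => @kmap _ _ _ (hK R) n); split.
    exact: represents_hom_of_deg hK_rep (@hK_deg R) (@hK_actF R).
  move=> n v b; rewrite betaF_kmap pF_kmap kmap_comp; apply: kmap_homotopy => a.
  by rewrite p_beta_coef homotopy_coef.
Qed.
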